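(* Let $G$ be a group and let $S_1,\dots,S_m\subset F$ be finitely many subsets such that each $S_i$ is a set of weak identities in $G$ of height $n_i$. Then $\bigcup_{i=1}^m S_i$ is a set of weak identities in $G$ of height at most $\sum_{i=1}^m n_i$ (i.e. the defining property holds with $N=\sum_i n_i$).
   Context: Let $F$ be the free group on countably many generators $g_1,g_2,\dots$. For $N\ge1$, $F^{\times N}$ is the direct product of $N$ copies of $F$, $i_k:F\to F^{\times N}$ the $k$-th inclusion. A subset $S\subset F$ is a set of weak identities in $G$ of height $N$ if for any $s_1,\dots,s_N\in S$ and any homomorphism $\rho:F^{\times N}\to G$ there is $k\in\{1,\dots,N\}$ with $\rho(i_k(s_k))=1$; $S$ is a set of weak identities if this holds for some $N\ge1$. *)

From Stdlib Require Import Relations.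
From mathcomp Require Import all_boot.
Set Implicit Arguments. Unset Strict Implicit. Unset Printing Implicit Defensive.

Record group := Group {
  gcar :> Type;
  gmul : gcar -> gcar -> gcar;
  gone : gcar;
  ginv : gcar -> gcar;
  gmulA : forall x y z, gmul x (gmul y z) = gmul (gmul x y) z;
  gmul1 : forall x, gmul gone x = x;
  gmulV : forall x, gmul (ginv x) x = gone
}.

(* The free group F on countably many generators g_0, g_1, ... :
   words in letters (i, true) = g_i and (i, false) = g_i^{-1},
   taken modulo free reduction.  Group law = concatenation. *)
Definition letter := (nat * bool)%type.
Definition word := seq letter.

Inductive red1 : word -> word -> Prop :=
  | red1_intro (u v : word) (i : nat) (b : bool) :
      red1 (u ++ (i, b) :: (i, ~~ b) :: v) (u ++ v).

Definition wequiv : word -> word -> Prop := clos_refl_sym_trans word red1.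

(* Elements of F^{x N} are N-tuples of words (componentwise equivalence,
   componentwise concatenation). *)
Definition is_hom (N : nat) (G : group) (rho : ('I_N -> word) -> G) : Prop :=
  (forall x y : 'I_N -> word, (forall k, wequiv (x k) (y k)) -> rho x = rho y) /\
  (forall x y : 'I_N -> word, rho (fun k => x k ++ y k) = gmul (rho x) (rho y)).

Definition incl (N : nat) (k : 'I_N) (s : word) : 'I_N -> word :=
  fun j => if j == k then s else [::].

Definition weak_identities_height (G : group) (S : word -> Prop) (N : nat) : Prop :=
  1 <= N /\
  forall s : 'I_N -> word, (forall k, S (s k)) ->
  forall rho : ('I_N -> word) -> G, is_hom rho ->
  exists k : 'I_N, rho (incl k (s k)) = gone G.

(* Each of the N = n_1 + ... + n_m words s_k lies in some S_(f k).  By the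
   pigeonhole principle some fibre of f has at least n_i elements; placing the
   coordinates of F^(x n_i) at n_i of these positions is a homomorphism
   F^(x n_i) -> F^(x N), and composing rho with it, the height n_i property of
   S_i produces a coordinate k with rho (i_k (s_k)) = 1. *)
From Stdlib Require Import Relations.
From mathcomp Require Import all_boot.

Lemma exists_large_fiber {T I : finType} (f : T -> I) (n : I -> nat) :
  0 < #|I| -> \sum_i n i <= #|T| -> exists i, n i <= #|[pred x | f x == i]|.
Proof.
move=> I_gt0 le_n_T; apply/existsP; apply: contraLR le_n_T.
rewrite -ltnNge negb_exists => /forallP small_fibers.
have -> : #|T| = \sum_i #|[pred x | f x == i]|.
  rewrite -sum1_card (partition_big f xpredT) //=.
  by apply: eq_bigr => i _; rewrite sum1_card.
have sum_fibers_lt : \sum_i (#|[pred x | f x == i]| + 1) <= \sum_i n i.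
  by apply: leq_sum => i _; rewrite addn1 ltnNge.
apply: leq_trans sum_fibers_lt.
by rewrite big_split /= sum1_card -addn1 leq_add2l.
Qed.

Lemma ord_injection_into {T : finType} {A : {pred T}} {n : nat} :
  n <= #|A| -> exists2 g : 'I_n -> T, injective g & forall j, g j \in A.
Proof.
move=> le_n_A; exists (fun j => enum_val (widen_ord le_n_A j)).
- by move=> j j' /enum_val_inj [/val_inj].
- by move=> j; apply: enum_valP.
Qed.

Definition spread {M N : nat} (g : 'I_M -> 'I_N) (x : 'I_M -> word) : 'I_N -> word :=
  fun k => if [pick j | g j == k] is Some j then x j else [::].

Lemma is_hom_spread {G : group} {M N : nat} (g : 'I_M -> 'I_N)
  {rho : ('I_N -> word) -> G} :
  is_hom rho -> is_hom (fun x => rho (spread g x)).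
Proof.
move=> [rho_wd rho_mul]; split.
- move=> x y xy; apply: rho_wd => k; rewrite /spread.
  by case: pickP => [j _|_]; [apply: xy | apply: rst_refl].
- move=> x y; rewrite -rho_mul; apply: rho_wd => k; rewrite /spread.
  by case: pickP => [j _|_]; apply: rst_refl.
Qed.

Lemma spread_incl {M N : nat} {g : 'I_M -> 'I_N} (j : 'I_M) (s : word) :
  injective g -> spread g (incl j s) =1 incl (g j) s.
Proof.
move=> inj_g k; rewrite /spread /incl; case: pickP => [j' /eqP <-|no_j].
  by rewrite (inj_eq inj_g).
by case: eqP => // k_gj; move: (no_j j); rewrite k_gj eqxx.
Qed.

Lemma weak_identities_sub {G : group} {S : word -> Prop} {n N : nat}
  {g : 'I_n -> 'I_N} {s : 'I_N -> word} {rho : ('I_N -> word) -> G} :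
  weak_identities_height G S n -> injective g -> (forall j, S (s (g j))) ->
  is_hom rho -> exists k, rho (incl k (s k)) = gone G.
Proof.
move=> [_ wiS] inj_g Ssg hom_rho.
have [j rho_j] := wiS _ Ssg _ (is_hom_spread g hom_rho).
exists (g j); rewrite -rho_j; apply: hom_rho.1 => k.
by rewrite spread_incl //; apply: rst_refl.
Qed.

Theorem corollary2p3 (G : group) (m : nat) (S : 'I_m -> word -> Prop)
  (n : 'I_m -> nat) :
  0 < m ->
  (forall i : 'I_m, weak_identities_height G (S i) (n i)) ->
  weak_identities_height G (fun w => exists i : 'I_m, S i w) (\sum_(i < m) n i).
Proof.
move=> m_gt0 wiS; split.
  pose i0 := Ordinal m_gt0.
  by apply: leq_trans (wiS i0).1 _; rewrite (bigD1 i0) //= leq_addr.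
move=> s Ss rho hom_rho.
have [f Sf] := fin_all_exists Ss.
have [i large_fiber] : exists i, n i <= #|[pred k | f k == i]|.
  by apply: exists_large_fiber; rewrite card_ord.
have [g inj_g fiber_g] := ord_injection_into large_fiber.
apply: weak_identities_sub (wiS i) inj_g _ hom_rho => j.
by have := Sf (g j); rewrite (eqP (fiber_g j)).
Qed.
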